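(* Let $t$ be a positive integer and let $p_1(x_1,\ldots,x_t)$, $p_2(x_1,\ldots,x_t)$ be polynomials with integer coefficients. Suppose there exist integers $s_1,s_2\ge 1$, matrices $A_1,M_1,N_1,B_1\in\mathbb{Z}^{s_1\times s_1}_{\rm uptr}$ and $A_2,M_2,N_2,B_2\in\mathbb{Z}^{s_2\times s_2}_{\rm uptr}$ such that \[A_1M_1^{a_1}N_1M_1^{a_2}N_1\cdots N_1M_1^{a_t}B_1=p_1(a_1,\ldots,a_t)E_{s_1}\] and \[A_2M_2^{a_1}N_2M_2^{a_2}N_2\cdots N_2M_2^{a_t}B_2=p_2(a_1,\ldots,a_t)E_{s_2}\] for all $a_1,\ldots,a_t\in\mathbb{N}$ (each product containing $t-1$ factors $N_j$). Then: (i) there exist $s_3\ge 1$ and $A_3,M_3,N_3,B_3\in\mathbb{Z}^{s_3\times s_3}_{\rm uptr}$ such that $A_3M_3^{a_1}N_3M_3^{a_2}N_3\cdots N_3M_3^{a_t}B_3=(p_1+p_2)(a_1,\ldots,a_t)E_{s_3}$ for all $a_1,\ldots,a_t\in\mathbb{N}$; (ii) there exist $s_4\ge 1$ and $A_4,M_4,N_4,B_4\in\mathbb{Z}^{s_4\times s_4}_{\rm uptr}$ such that $A_4M_4^{a_1}N_4M_4^{a_2}N_4\cdots N_4M_4^{a_t}B_4=(p_1p_2)(a_1,\ldots,a_t)E_{s_4}$ for all $a_1,\ldots,a_t\in\mathbb{N}$; (iii) for every $c\in\mathbb{Z}$ there exists $A_5\in\mathbb{Z}^{s_1\times s_1}_{\rm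 uptr}$ such that $A_5M_1^{a_1}N_1M_1^{a_2}N_1\cdots N_1M_1^{a_t}B_1=c\,p_1(a_1,\ldots,a_t)E_{s_1}$ for all $a_1,\ldots,a_t\in\mathbb{N}$.
   Context: $\mathbb{N}$ is the set of nonnegative integers. $\mathbb{Z}^{s\times s}_{\rm uptr}$ is the set of upper-triangular $s\times s$ integer matrices. $E_s$ denotes the $s\times s$ matrix whose only nonzero entry is the entry in row $1$, column $s$, equal to $1$. *)

From HB Require Import structures.
From mathcomp Require Import all_boot all_order all_algebra.
From mathcomp Require Export mpoly.
Set Implicit Arguments. Unset Strict Implicit. Unset Printing Implicit Defensive.
Import Order.TTheory GRing.Theory Num.Theory.
Local Open Scope ring_scope.

Definition uptr (n : nat) (A : 'M[int]_n) : Prop :=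
  forall i j : 'I_n, (j < i)%N -> A i j = 0.

(* E_s for s = n.+1 : the only nonzero entry is 1 in row 1, column s. *)
Definition Emx (n : nat) : 'M[int]_(n.+1) := delta_mx ord0 ord_max.

Fixpoint mword (n : nat) (M N : 'M[int]_(n.+1)) (l : seq nat) : 'M[int]_(n.+1) :=
  match l with
  | [::] => 1%:M
  | [:: a] => M ^+ a
  | a :: l' => M ^+ a *m N *m mword M N l'
  end.

Definition wordprod (t n : nat) (A M N B : 'M[int]_(n.+1)) (a : 'I_t -> nat)
  : 'M[int]_(n.+1) :=
  A *m mword M N [seq a i | i <- enum 'I_t] *m B.

Definition represents (t n : nat) (p : {mpoly int[t]}) (A M N B : 'M[int]_(n.+1)) : Prop :=
  [/\ uptr A, uptr M, uptr N, uptr B &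
    forall a : 'I_t -> nat,
      wordprod A M N B a = p.@[fun i => (a i)%:R] *: Emx n].

From HB Require Import structures.
From mathcomp Require Import all_boot all_order all_algebra.
From mathcomp Require Import mpoly.
From mathcomp Require Import mxtens zify.
Set Implicit Arguments. Unset Strict Implicit. Unset Printing Implicit Defensive.
Import GRing.Theory.
Local Open Scope ring_scope.

(* Both the block-diagonal sum (X, Y) |-> diag(X, Y) and the Kronecker product
   (X, Y) |-> X *t Y are unital and multiplicative on pairs of matrices, so they
   turn the two words into the word of the combined matrices, and they preserve
   upper triangularity (the Kronecker product because its indices are ordered
   lexicographically).  The Kronecker product of E_{s1} and E_{s2} is again an
   E_s, which gives the product p1 p2.  The block-diagonal sum gives
   diag(p1 E_{s1}, p2 E_{s2}); multiplying on the left by an upper-triangular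
   matrix adding the first row of the second block to the first row, and on the
   right by one adding the last column of the first block to the last column,
   folds it into (p1 + p2) E_s.  Scaling A1 scales p1. *)

Section WordMorphism.

Variables (n1 n2 k : nat).
Variable g : 'M[int]_(n1.+1) -> 'M[int]_(n2.+1) -> 'M[int]_(k.+1).
Hypothesis g1 : g 1%:M 1%:M = 1%:M.
Hypothesis gM : forall X1 Y1 X2 Y2, g (X1 *m Y1) (X2 *m Y2) = g X1 X2 *m g Y1 Y2.

Lemma morph_expmx (M1 : 'M_(n1.+1)) (M2 : 'M_(n2.+1)) a :
  g (M1 ^+ a) (M2 ^+ a) = g M1 M2 ^+ a.
Proof.
elim: a => [|a IH]; first by rewrite !expr0.
by rewrite !exprS -!mulmxE gM IH.
Qed.

Lemma morph_mword M1 N1 M2 N2 l :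
  mword (g M1 M2) (g N1 N2) l = g (mword M1 N1 l) (mword M2 N2 l).
Proof.
elim: l => [|a l IH] /=; first by rewrite g1.
by case: l IH => [|b l] IH; rewrite ?morph_expmx // IH !gM morph_expmx.
Qed.

Lemma morph_wordprod t A1 M1 N1 B1 A2 M2 N2 B2 (a : 'I_t -> nat) :
  wordprod (g A1 A2) (g M1 M2) (g N1 N2) (g B1 B2) a =
  g (wordprod A1 M1 N1 B1 a) (wordprod A2 M2 N2 B2 a).
Proof. by rewrite /wordprod morph_mword !gM. Qed.

End WordMorphism.

Lemma wordprod_scalel t n c (A M N B : 'M[int]_(n.+1)) (a : 'I_t -> nat) :
  wordprod (c *: A) M N B a = c *: wordprod A M N B a.
Proof. by rewrite /wordprod -!scalemxAl. Qed.

Section UpperTriangular.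

Variable n : nat.
Implicit Types A B : 'M[int]_n.

Lemma uptr_mulmx A B : uptr A -> uptr B -> uptr (A *m B).
Proof.
move=> uA uB i j lt_ji; rewrite mxE big1 // => l _.
have [lt_li | le_il] := ltnP l i; first by rewrite uA ?mul0r.
by rewrite uB ?mulr0 // (leq_trans lt_ji).
Qed.

Lemma uptr_add A B : uptr A -> uptr B -> uptr (A + B).
Proof. by move=> uA uB i j lt_ji; rewrite mxE uA ?uB ?addr0. Qed.

Lemma uptr_scale c A : uptr A -> uptr (c *: A).
Proof. by move=> uA i j lt_ji; rewrite mxE uA ?mulr0. Qed.

Lemma uptr_delta (i0 j0 : 'I_n) : (i0 <= j0)%N -> uptr (delta_mx i0 j0).
Proof.
move=> le_ij i j lt_ji; rewrite mxE.
case: eqP => [ei|] //; case: eqP => [ej|] //.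
by move: lt_ji; rewrite ei ej ltnNge le_ij.
Qed.

End UpperTriangular.

Lemma uptr_block_diag m n (A : 'M[int]_m) (B : 'M[int]_n) :
  uptr A -> uptr B -> uptr (block_mx A 0 0 B).
Proof.
move=> uA uB i j; rewrite -(splitK i) -(splitK j).
case: (split i) => i'; case: (split j) => j' /=.
- by rewrite block_mxEul => /uA.
- by rewrite block_mxEur mxE.
- by rewrite block_mxEdl mxE.
- by rewrite block_mxEdr ltn_add2l => /uB.
Qed.

Lemma uptr_tens m n (A : 'M[int]_m.+1) (B : 'M[int]_n.+1) :
  uptr A -> uptr B -> uptr (A *t B).
Proof.
move=> uA uB i j.
case: (mxtens_indexP i) => i1 i2; case: (mxtens_indexP j) => j1 j2.
rewrite tensmxE /= => lt_ji.
have [lt1|le1] := ltnP j1 i1; first by rewrite uA ?mul0r.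
have [lt2|le2] := ltnP j2 i2; first by rewrite uB ?mulr0.
by move: lt_ji; rewrite ltnNge leq_add // leq_mul2r le1 orbT.
Qed.

Lemma mul_block_diag (R : pzRingType) m n (X1 X2 : 'M[R]_m) (Y1 Y2 : 'M[R]_n) :
  block_mx X1 0 0 Y1 *m block_mx X2 0 0 Y2 = block_mx (X1 *m X2) 0 0 (Y1 *m Y2).
Proof. by rewrite mulmx_block !mulmx0 !mul0mx !addr0 !add0r. Qed.

Lemma block_diag_delta (R : pzRingType) m m' n n' (c1 c2 : R)
    (i1 : 'I_m) (j1 : 'I_m') (i2 : 'I_n) (j2 : 'I_n') :
  block_mx (c1 *: delta_mx i1 j1) 0 0 (c2 *: delta_mx i2 j2) =
  c1 *: delta_mx (lshift n i1) (lshift n' j1)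
  + c2 *: delta_mx (rshift m i2) (rshift m' j2).
Proof.
rewrite delta_mx_ushift delta_mx_lshift delta_mx_dshift delta_mx_rshift.
by rewrite !scale_col_mx !scale_row_mx !scaler0 add_col_mx addr0 add0r.
Qed.

Lemma mulmx_delta_fold (R : comPzRingType) n (i0 i1 j0 j1 : 'I_n) (c1 c2 : R) :
  i0 != i1 -> j0 != j1 ->
  (delta_mx i0 i0 + delta_mx i0 i1)
    *m (c1 *: delta_mx i0 j0 + c2 *: delta_mx i1 j1)
    *m (delta_mx j0 j1 + delta_mx j1 j1) = (c1 + c2) *: delta_mx i0 j1.
Proof.
move=> /negPf ne_i /negPf ne_j.
rewrite mulmxDl !mulmxDr -!scalemxAr !mul_delta_mx_cond (eq_sym i1) ne_i !eqxx.
rewrite !mulr0n !mulr1n !scaler0 addr0 add0r !mulmxDl -!scalemxAl.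
rewrite !mul_delta_mx_cond (eq_sym j1) ne_j !eqxx !mulr0n !mulr1n !scaler0.
by rewrite add0r addr0 scalerDl.
Qed.

Lemma Emx_block_diag m n :
  Emx (m + n.+1) = delta_mx (lshift n.+1 (@ord0 m)) (rshift m.+1 (@ord_max n)).
Proof. by congr delta_mx; apply: val_inj => /=; rewrite addnS. Qed.

Lemma mxtens_index_eq m n (i j : 'I_m * 'I_n) :
  (mxtens_index i == mxtens_index j) = (i == j).
Proof. exact: (inj_eq (can_inj (@mxtens_indexK m n))). Qed.

Section Kronecker.

Variable R : comPzRingType.

Lemma tensmx_scale m n p q (a b : R) (A : 'M[R]_(m, n)) (B : 'M[R]_(p, q)) :
  (a *: A) *t (b *: B) = (a * b) *: (A *t B).
Proof. by apply/matrixP => i j; rewrite !mxE mulrACA. Qed.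

Lemma tens_delta_mx m n p q (i : 'I_m) (j : 'I_n) (k : 'I_p) (l : 'I_q) :
  delta_mx i j *t delta_mx k l
  = delta_mx (mxtens_index (i, k)) (mxtens_index (j, l)) :> 'M[R]_(_, _).
Proof.
apply/matrixP => x y.
case: (mxtens_indexP x) => i' k'; case: (mxtens_indexP y) => j' l'.
by rewrite tensmxE !mxE !mxtens_index_eq !xpair_eqE -natrM mulnb andbACA.
Qed.

Lemma tensmx1 m n : (1%:M : 'M[R]_m) *t (1%:M : 'M[R]_n) = 1%:M.
Proof.
apply/matrixP => x y.
case: (mxtens_indexP x) => i k; case: (mxtens_indexP y) => j l.
by rewrite tensmxE !mxE mxtens_index_eq xpair_eqE -natrM mulnb.
Qed.

End Kronecker.

Lemma Emx_tens m n : Emx m *t Emx n = Emx (n + m * n.+1).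
Proof.
rewrite /Emx tens_delta_mx; congr delta_mx; apply: val_inj => /=; lia.
Qed.

Section Closure.

Variables (t s1 s2 : nat) (p1 p2 : {mpoly int[t]}).
Variables (A1 M1 N1 B1 : 'M[int]_(s1.+1)) (A2 M2 N2 B2 : 'M[int]_(s2.+1)).
Hypothesis rep1 : represents p1 A1 M1 N1 B1.
Hypothesis rep2 : represents p2 A2 M2 N2 B2.

Lemma represents_scale c : represents (c *: p1) (c *: A1) M1 N1 B1.
Proof.
case: rep1 => uA uM uN uB word; split => //; first exact: uptr_scale.
by move=> a; rewrite wordprod_scalel word mevalZ scalerA.
Qed.

Lemma represents_add :
  exists s3 (A3 M3 N3 B3 : 'M[int]_(s3.+1)), represents (p1 + p2) A3 M3 N3 B3.
Proof.
case: rep1 rep2 => uA1 uM1 uN1 uB1 word1 [uA2 uM2 uN2 uB2 word2].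
pose D (X : 'M_(s1.+1)) (Y : 'M_(s2.+1)) : 'M[int]_(s1.+1 + s2.+1) :=
  block_mx X 0 0 Y.
pose i0 := lshift s2.+1 (@ord0 s1); pose i1 := rshift s1.+1 (@ord0 s2).
pose j0 := lshift s2.+1 (@ord_max s1); pose j1 := rshift s1.+1 (@ord_max s2).
pose P := delta_mx i0 i0 + delta_mx i0 i1 : 'M[int]_(s1.+1 + s2.+1).
pose Q := delta_mx j0 j1 + delta_mx j1 j1 : 'M[int]_(s1.+1 + s2.+1).
have D1 : D 1%:M 1%:M = 1%:M by rewrite /D -scalar_mx_block.
have DM X1 Y1 X2 Y2 : D (X1 *m Y1) (X2 *m Y2) = D X1 X2 *m D Y1 Y2.
  by rewrite /D mul_block_diag.
exists (s1 + s2.+1), (P *m D A1 A2), (D M1 M2), (D N1 N2), (D B1 B2 *m Q).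
split; try exact: (@uptr_block_diag s1.+1 s2.+1).
- apply: (@uptr_mulmx (s1.+1 + s2.+1)); last exact: uptr_block_diag.
  by apply: uptr_add; apply: uptr_delta.
- apply: (@uptr_mulmx (s1.+1 + s2.+1)); first exact: uptr_block_diag.
  by apply: uptr_add; apply: uptr_delta => /=; lia.
move=> a; have -> : wordprod (P *m D A1 A2) (D M1 M2) (D N1 N2) (D B1 B2 *m Q) a
    = P *m wordprod (D A1 A2) (D M1 M2) (D N1 N2) (D B1 B2) a *m Q.
  by rewrite /wordprod !mulmxA.
(* The size is explicit: s1.+1 + s2.+1 is only convertible to (s1 + s2.+1).+1. *)
rewrite (@morph_wordprod _ _ (s1 + s2.+1) D D1 DM) word1 word2 mevalD.
rewrite Emx_block_diag.
rewrite /D /Emx block_diag_delta mulmx_delta_fold // -val_eqE /=.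
lia.
Qed.

Lemma represents_mul :
  exists s4 (A4 M4 N4 B4 : 'M[int]_(s4.+1)), represents (p1 * p2) A4 M4 N4 B4.
Proof.
case: rep1 rep2 => uA1 uM1 uN1 uB1 word1 [uA2 uM2 uN2 uB2 word2].
pose T (X : 'M_(s1.+1)) (Y : 'M_(s2.+1)) : 'M[int]_(s1.+1 * s2.+1) :=
  X *t Y.
have T1 : T 1%:M 1%:M = 1%:M by exact: tensmx1.
have TM X1 Y1 X2 Y2 : T (X1 *m Y1) (X2 *m Y2) = T X1 X2 *m T Y1 Y2.
  by rewrite /T tensmx_mul.
exists (s2 + s1 * s2.+1), (T A1 A2), (T M1 M2), (T N1 N2), (T B1 B2).
split; try exact: (@uptr_tens s1 s2).
move=> a; rewrite (@morph_wordprod _ _ (s2 + s1 * s2.+1) T T1 TM) word1 word2.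
by rewrite /T tensmx_scale Emx_tens mevalM.
Qed.

End Closure.

Theorem lemma4p2 (t : nat) (ht : (0 < t)%N) (p1 p2 : {mpoly int[t]})
  (s1 s2 : nat)
  (A1 M1 N1 B1 : 'M[int]_(s1.+1)) (A2 M2 N2 B2 : 'M[int]_(s2.+1)) :
  represents p1 A1 M1 N1 B1 ->
  represents p2 A2 M2 N2 B2 ->
  [/\ (exists s3 (A3 M3 N3 B3 : 'M[int]_(s3.+1)), represents (p1 + p2) A3 M3 N3 B3),
      (exists s4 (A4 M4 N4 B4 : 'M[int]_(s4.+1)), represents (p1 * p2) A4 M4 N4 B4) &
      (forall c : int, exists A5 : 'M[int]_(s1.+1),
          represents (c *: p1) A5 M1 N1 B1)].
Proof.
move=> rep1 rep2; split.
- exact: represents_add rep1 rep2.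
- exact: represents_mul rep1 rep2.
- by move=> c; exists (c *: A1); apply: represents_scale.
Qed.
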